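(* Let $(g,f)$ be a Riordan matrix that possesses a type-I $B$-sequence, let $(a_j)_{j\ge0}$ be its $A$-sequence, and write $f(t)=\sum_{j\ge0}f_jt^j$. Then $a_0=1$ and $a_2=0$; equivalently, $f_1=1$ and $f_3=f_2^2$.
   Context: Let $K$ be $\mathbb{R}$ or $\mathbb{C}$. A (proper) Riordan matrix is a pair $(g,f)$ of formal power series in $K[[t]]$ with $g(0)=1$, $f(0)=0$, $f'(0)\neq 0$, identified with the infinite lower triangular matrix $(d_{n,k})_{n,k\ge0}$, $d_{n,k}=[t^n]g(t)f(t)^k$; we set $d_{n,k}=0$ if $n<0$, $k<0$ or $k>n$. The $A$-sequence $(a_j)_{j\ge0}$ of $(g,f)$ is the unique sequence whose generating function $A(t)=\sum_j a_jt^j$ satisfies $f(t)=tA(f(t))$. A type-I $B$-sequence of $(g,f)$ is a sequence $(b_j)_{j\ge0}$ such that $d_{n+1,k}=d_{n,k-1}+\sum_{j\ge0}b_j d_{n-j,k+j}$ for all $n\ge0$ and $k\ge1$. *)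

From mathcomp Require Import all_boot all_order all_algebra.
Set Implicit Arguments. Unset Strict Implicit. Unset Printing Implicit Defensive.
Import Order.TTheory GRing.Theory Num.Theory.
Local Open Scope ring_scope.

Definition fps (K : Type) := nat -> K.

Definition fps_mul (K : numFieldType) (a b : fps K) : fps K :=
  fun n => \sum_(i < n.+1) a i * b (n - i)%N.

Definition fps_one (K : numFieldType) : fps K := fun n => if n == 0%N then 1 else 0.

Fixpoint fps_pow (K : numFieldType) (f : fps K) (k : nat) : fps K :=
  match k with
  | 0%N => fps_one K
  | k'.+1 => fps_mul (fps_pow f k') f
  end.

Definition is_riordan (K : numFieldType) (g f : fps K) : Prop :=
  g 0%N = 1 /\ f 0%N = 0 /\ f 1%N != 0.

Definition riordan_entry (K : numFieldType) (g f : fps K) (n k : nat) : K :=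
  if (k <= n)%N then fps_mul g (fps_pow f k) n else 0.

(* a is the A-sequence of f: f(t) = t A(f(t)), i.e. for all n,
   [t^n] f = [t^(n-1)] A(f) (with [t^0] f = 0 since f(0)=0), where
   [t^m] A(f) = sum_{j<=m} a_j [t^m] f^j  (terms j > m vanish as f(0)=0). *)
Definition is_A_sequence (K : numFieldType) (f : fps K) (a : nat -> K) : Prop :=
  f 0%N = 0 /\
  forall m : nat, f m.+1 = \sum_(j < m.+1) a j * fps_pow f j m.

(* type-I B-sequence: d_{n+1,k} = d_{n,k-1} + sum_{j>=0} b_j d_{n-j,k+j}
   for n >= 0, k >= 1; the terms with j > n vanish (d_{n-j,.} = 0 for n-j < 0). *)
Definition is_typeI_B_sequence (K : numFieldType) (g f : fps K) (b : nat -> K) : Prop :=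
  forall n k : nat, (1 <= k)%N ->
    riordan_entry g f n.+1 k =
      riordan_entry g f n k.-1 +
      \sum_(j < n.+1) b j * riordan_entry g f (n - j)%N (k + j)%N.

(* Only the first column of the array matters.  For k = 1 and n <= 2 every term
   b_j d_{n-j,1+j} with j >= 1 of the B-recurrence lies above the diagonal, so
   it reduces to [t^(n+1)] g f = g_n + b_0 [t^n] g f; for n = 0, 1, 2 this gives
   f_1 = 1, b_0 = f_2 and f_3 = f_2^2.  Comparing the coefficients of t, t^2,
   t^3 in f = t A(f) gives a_0 = f_1, f_2 = a_1 f_1 and
   f_3 = a_1 f_2 + a_2 f_1^2, whence a_0 = 1 and a_2 = 0. *)

From mathcomp Require Import all_boot all_order all_algebra.
From mathcomp Require Import ring zify.
Set Implicit Arguments. Unset Strict Implicit. Unset Printing Implicit Defensive.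
Import Order.TTheory GRing.Theory Num.Theory.
Local Open Scope ring_scope.

Section FpsCoefficients.
Variable K : numFieldType.
Implicit Types a b f : fps K.

Lemma fps_mul1 b : fps_mul (fps_one K) b =1 b.
Proof.
move=> n; rewrite /fps_mul big_ord_recl subn0 mul1r big1 ?addr0 // => i _.
by rewrite mul0r.
Qed.

Lemma fps_mulr1 a : fps_mul a (fps_one K) =1 a.
Proof.
move=> n; rewrite /fps_mul big_ord_recr /= subnn mulr1 big1 ?add0r // => i _.
by rewrite /fps_one subn_eq0 leqNgt ltn_ord mulr0.
Qed.

Lemma eq_fps_mul a a' b b' :
  a =1 a' -> b =1 b' -> fps_mul a b =1 fps_mul a' b'.
Proof. by move=> eq_a eq_b n; apply: eq_bigr => i _; rewrite eq_a eq_b. Qed.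

Lemma fps_pow1 f : fps_pow f 1 =1 f.
Proof. exact: fps_mul1. Qed.

Lemma fps_mul_coef1 a b : fps_mul a b 1 = a 0%N * b 1%N + a 1%N * b 0%N.
Proof. by rewrite /fps_mul !big_ord_recl big_ord0 addr0. Qed.

Lemma fps_mul_coef2 a b :
  fps_mul a b 2 = a 0%N * b 2%N + a 1%N * b 1%N + a 2%N * b 0%N.
Proof. by rewrite /fps_mul !big_ord_recl big_ord0 addr0 !addrA. Qed.

Lemma fps_mul_coef3 a b :
  fps_mul a b 3 = a 0%N * b 3%N + a 1%N * b 2%N + a 2%N * b 1%N + a 3%N * b 0%N.
Proof. by rewrite /fps_mul !big_ord_recl big_ord0 addr0 !addrA. Qed.

End FpsCoefficients.

Section FirstColumn.
Variables (K : numFieldType) (g f : fps K).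

Lemma riordan_entry_col0 n : riordan_entry g f n 0 = g n.
Proof. exact: fps_mulr1. Qed.

Lemma riordan_entry_col1 n : riordan_entry g f n.+1 1 = fps_mul g f n.+1.
Proof. by rewrite /riordan_entry /= (eq_fps_mul (frefl g) (fps_pow1 f)). Qed.

Lemma typeI_B_col1 b n : is_typeI_B_sequence g f b -> (n <= 2)%N ->
  riordan_entry g f n.+1 1 = g n + b 0%N * riordan_entry g f n 1.
Proof.
move=> Bb le_n2; rewrite Bb // riordan_entry_col0 big_ord_recl /= addn0 subn0.
rewrite big1 ?addr0 // => j _.
by rewrite /riordan_entry ifN ?mulr0 // -ltnNge /bump /=; lia.
Qed.

End FirstColumn.

Section TypeIBSequence.
Variables (K : numFieldType) (g f : fps K) (b : nat -> K).
Hypotheses (g0 : g 0%N = 1) (f0 : f 0%N = 0) (Bb : is_typeI_B_sequence g f b).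

Lemma typeI_B_f1 : f 1%N = 1.
Proof.
have := typeI_B_col1 Bb (isT : (0 <= 2)%N).
by rewrite riordan_entry_col1 fps_mul_coef1 /riordan_entry /= g0 f0 !mulr0 !addr0 mul1r.
Qed.

Lemma typeI_B_b0 : b 0%N = f 2%N.
Proof.
have := typeI_B_col1 Bb (isT : (1 <= 2)%N).
rewrite !riordan_entry_col1 fps_mul_coef1 fps_mul_coef2 g0 f0 typeI_B_f1.
rewrite !(mul1r, mulr1, mulr0, addr0) => eq2.
by apply: (addrI (g 1%N)); rewrite -eq2 addrC.
Qed.

Lemma typeI_B_f3 : f 3%N = f 2%N ^+ 2.
Proof.
have := typeI_B_col1 Bb (isT : (2 <= 2)%N).
rewrite !riordan_entry_col1 fps_mul_coef2 fps_mul_coef3 g0 f0 typeI_B_f1 typeI_B_b0.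
rewrite !(mul1r, mulr1, mulr0, addr0) => eq3.
by apply: (addIr (g 1%N * f 2%N + g 2%N)); rewrite addrA eq3; ring.
Qed.

End TypeIBSequence.

Section ASequence.
Variables (K : numFieldType) (f : fps K) (a : nat -> K).
Hypothesis Aa : is_A_sequence f a.

Lemma A_sequence_a0 : a 0%N = f 1%N.
Proof. by rewrite Aa.2 big_ord1 /= /fps_one /= mulr1. Qed.

Lemma A_sequence_f2 : f 2%N = a 1%N * f 1%N.
Proof.
by rewrite Aa.2 !big_ord_recl big_ord0 /= fps_mul1 /fps_one /= mulr0 add0r addr0.
Qed.

Lemma A_sequence_f3 : f 3%N = a 1%N * f 2%N + a 2%N * f 1%N ^+ 2.
Proof.
rewrite Aa.2 !big_ord_recl big_ord0 /= fps_mul1 fps_mul_coef2 !fps_mul1 Aa.1.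
by rewrite /fps_one /= mulr0 add0r addr0 mulr0 addr0 mul0r add0r.
Qed.

End ASequence.

Theorem theorem2p2 (K : numFieldType) (g f : fps K) (a : nat -> K) :
  is_riordan g f ->
  (exists b : nat -> K, is_typeI_B_sequence g f b) ->
  is_A_sequence f a ->
  (a 0%N = 1 /\ a 2%N = 0) /\ (f 1%N = 1 /\ f 3%N = f 2%N ^+ 2).
Proof.
move=> [g0 [f0 _]] [b Bb] Aa.
have f1 := typeI_B_f1 g0 f0 Bb.
have f3 := typeI_B_f3 g0 f0 Bb.
have a1 : a 1%N = f 2%N by rewrite (A_sequence_f2 Aa) f1 mulr1.
have a2 : a 2%N = 0.
  move: (A_sequence_f3 Aa); rewrite f3 a1 f1 expr1n mulr1 expr2 => /eqP.
  by rewrite addrC -subr_eq subrr eq_sym => /eqP.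
by rewrite (A_sequence_a0 Aa) f1 a2 f3.
Qed.
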